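(* Given the ability to perform incoherent unitaries, computational basis measurements and classical control (supplemented with an arbitrary ancillary state), it is impossible to implement $n$ Hadamards $H^{\otimes n}$ $\epsilon$-approximately with non-zero probability for $0\le \epsilon < 1-2^{-n}$. In particular, a single Hadamard cannot be implemented $\epsilon$-approximately with non-zero probability for $0\le\epsilon<\tfrac12$.
   Context: Fix the computational basis $\{|x\rangle\}$. A unitary is incoherent if it has the form $U=\sum_x e^{i\theta_x}|\pi(x)\rangle\langle x|$ for real $\theta_x$ and a permutation $\pi$. Such operations with an ancilla $\tau$ are modelled as channels $\rho\mapsto \mathrm{Tr}_2\big(U(\rho\otimes\tau)U^\dagger\big)$ with $U$ incoherent, or probabilistically as convex combinations of normalised subchannels $\rho\mapsto \alpha\,\mathrm{Tr}_X\big((I\otimes|x\rangle\langle x|)\,U(\rho\otimes\tau)U^\dagger\big)$ with $\alpha$ independent of $\rho$. A channel $\mathcal{E}$ $\epsilon$-approximates $\mathcal{V}$ if the induced trace distance $\max_\rho \tfrac12\|\mathcal{E}(\rho)-\mathcal{V}(\rho)\|_1\le\epsilon$. *)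

From HB Require Import structures.
From mathcomp Require Import all_boot all_order all_algebra.
From mathcomp Require Import fingroup perm sesquilinear spectral.
From mathcomp Require mxtens.

Set Implicit Arguments.
Unset Strict Implicit.
Unset Printing Implicit Defensive.

Import Order.TTheory GRing.Theory Num.Theory Num.Def.
Local Open Scope ring_scope.

Section Quantum.
Variable C : numClosedFieldType.

Definition adjmx m k (A : 'M[C]_(m, k)) : 'M[C]_(k, m) := (map_mx conjC A)^T.

Definition psdmx k (A : 'M[C]_k) : Prop :=
  forall v : 'rV[C]_k, 0 <= (v *m A *m adjmx v) 0 0.

Definition density k (A : 'M[C]_k) : Prop := psdmx A /\ \tr A = 1.

(* trace norm ||A||_1 = Tr sqrt(A^dagger A) = sum of the square roots of the
   eigenvalues of A^dagger A (the singular values of A) *)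
Definition trace_norm k (A : 'M[C]_k) : C :=
  \sum_(i < k) sqrtC (spectral_diag (adjmx A *m A) 0 i).

Definition trace_dist k (A B : 'M[C]_k) : C := 2^-1 * trace_norm (A - B).

Definition incoherent_unitary N (U : 'M[C]_N) : Prop :=
  exists (pi : 'S_N) (ph : 'I_N -> C),
    (forall j, `|ph j| = 1) /\
    U = \matrix_(i, j) (if i == pi j then ph j else 0).

Definition hadamard : 'M[C]_2 :=
  (sqrtC 2)^-1 *: \matrix_(i < 2, j < 2) ((-1) ^+ (i * j)%N).
Definition hadamard_n n : 'M[C]_(2 ^ n) := mxtens.ntensmx hadamard n.

(* Joint index of system (a : 'I_s) (x) measured ancilla register
   (x : 'I_b) (x) discarded ancilla register (c : 'I_d). *)
Definition jidx s b d (a : 'I_s) (x : 'I_b) (c : 'I_d) : 'I_(s * (b * d)) :=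
  mxtens.mxtens_index (a, mxtens.mxtens_index (x, c)).

(* Unnormalised subchannel
     rho |-> Tr_{BD}((I (x) |x><x| (x) I) U (rho (x) tau) U^dagger)
   where the ancilla tau lives on B (x) D, B is measured in the computational
   basis (outcome x) and D is discarded. *)
Definition subchannel s b d (U : 'M[C]_(s * (b * d))) (tau : 'M[C]_(b * d))
    (x : 'I_b) (rho : 'M[C]_s) : 'M[C]_s :=
  let J := U *m mxtens.tensmx rho tau *m adjmx U in
  \matrix_(a, a') \sum_(c < d) J (jidx a x c) (jidx a' x c).

Definition normalised_subchannel s (S : 'M[C]_s -> 'M[C]_s) : Prop :=
  exists (b d : nat) (tau : 'M[C]_(b * d)) (U : 'M[C]_(s * (b * d)))
         (x : 'I_b) (alpha : C),
    [/\ density tau, incoherent_unitary U, 0 < alpha,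
        (forall rho, density rho -> alpha * \tr (subchannel U tau x rho) = 1) &
        (forall rho, S rho = alpha *: subchannel U tau x rho)].

(* channels implementable with incoherent unitaries, computational basis
   measurements, classical control and an arbitrary ancilla: convex
   combinations of normalised subchannels *)
Definition incoherent_implementable s (E : 'M[C]_s -> 'M[C]_s) : Prop :=
  exists (m : nat) (p : 'I_m -> C) (S : 'I_m -> 'M[C]_s -> 'M[C]_s),
    [/\ forall k, 0 <= p k, \sum_(k < m) p k = 1,
        forall k, normalised_subchannel (S k) &
        forall rho, E rho = \sum_(k < m) p k *: S k rho].

Definition eps_approximates s (E : 'M[C]_s -> 'M[C]_s) (V : 'M[C]_s)
    (eps : C) : Prop :=
  forall rho, density rho -> trace_dist (E rho) (V *m rho *m adjmx V) <= eps.

End Quantum.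

From mathcomp Require Import all_boot all_order all_algebra.
From mathcomp Require Import fingroup perm sesquilinear spectral ring.
From mathcomp Require mxtens.

(** Incoherent operations can neither create nor read coherences: conjugation
   by an incoherent unitary permutes the diagonal, and measuring or discarding
   ancilla registers only sums diagonal entries, so the diagonal of [E rho]
   depends only on the diagonal of [rho].  The states [rho_b = H^n |b><b| H^n]
   all have the maximally mixed diagonal (all entries of [H^n] have the same
   modulus), hence their images all share the diagonal of one state [D], while
   the targets are the [|b><b|].  The trace distance from a unit-trace matrix
   [D'] to [|b><b|] is at least [|1 - D'_bb|] (test against the reflection
   [1 - 2 |b><b|]), and summing over the [2^n] strings [b] gives
   [2^n eps >= 2^n - \tr D = 2^n - 1]. *)

Import Order.TTheory GRing.Theory Num.Theory.
Local Open Scope ring_scope.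
Local Open Scope sesquilinear_scope.

Section IncoherentHadamard.
Set Implicit Arguments.
Unset Strict Implicit.
Variable C : numClosedFieldType.

Lemma adjmxE m k (A : 'M[C]_(m, k)) : adjmx A = A ^t*.
Proof. by rewrite /adjmx map_trmx. Qed.

Lemma trmxC_mul m k l (A : 'M[C]_(m, k)) (B : 'M[C]_(k, l)) :
  (A *m B) ^t* = B ^t* *m A ^t*.
Proof. by rewrite trmx_mul map_mxM. Qed.

Lemma mulmx_trC_diag m k (P : 'M[C]_(m, k)) (B : 'M[C]_k) i :
  (P *m B *m P ^t*) i i = dotmx (row i P *m B) (row i P).
Proof.
rewrite dotmxE -!row_mul !mxE; apply: eq_bigr => j _.
by rewrite !mxE.
Qed.

Lemma spectral_diag_normalE k (A : 'M[C]_k) i : A \is normalmx ->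
  spectral_diag A 0 i = (spectralmx A *m A *m (spectralmx A) ^t*) i i.
Proof.
move=> /orthomx_spectralP; set P := spectralmx A => AE.
have Pu : P \is unitarymx := spectral_unitarymx A.
rewrite [in RHS]AE invmx_unitary // !mulmxA (unitarymxP Pu) mul1mx mulmxtVK //.
by rewrite mxE eqxx mulr1n.
Qed.

(* In an eigenbasis [P] of [X^* X] each diagonal entry of [P W X P^*] is an
   inner product, bounded by Cauchy-Schwarz by a singular value of [X]. *)
Lemma norm_tr_mul_unitary_le k (X W : 'M[C]_k) : W \is unitarymx ->
  `|\tr (X *m W)| <= trace_norm X.
Proof.
move=> Wu; rewrite /trace_norm adjmxE.
set A := X ^t* *m X; set P := spectralmx A.
have Pu : P \is unitarymx := spectral_unitarymx A.
have An : A \is normalmx by apply/normalmxP; rewrite /A trmxC_mul trmxCK.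
have PtP : P ^t* *m P = 1%:M by rewrite -[P ^t*]mul1mx mulmxKtV.
have -> : \tr (X *m W) = \sum_i (P *m (W *m X) *m P ^t*) i i.
  by rewrite -/(\tr _) mxtrace_mulC [RHS]mxtrace_mulC !mulmxA PtP mul1mx.
apply: le_trans (ler_norm_sum _ _ _) _; rewrite ler_sum // => i _.
rewrite spectral_diag_normalE // !mulmx_trC_diag.
have [/= + _] := CauchySchwarz_sqrt (@dotmx C k) (row i P *m W) (row i P *m X ^t*).
rewrite !dotmxE !trmxC_mul trmxCK !mulmxA mulmxtVK //.
have /row_unitarymxP/(_ i i) := Pu; rewrite dotmxE eqxx => ->.
by rewrite sqrtC1 mul1r.
Qed.

Lemma mxtrace_mul_delta k (M : 'M[C]_k) b : \tr (M *m delta_mx b b) = M b b.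
Proof.
rewrite -(mul_delta_mx (0 : 'I_1)) mulmxA mxtrace_mulC mulmxA -rowE -colE.
by rewrite trace_mx11 !mxE.
Qed.

Lemma trace_dist_delta_ge k (D : 'M[C]_k) b : \tr D = 1 ->
  `|1 - D b b| <= trace_dist D (delta_mx b b).
Proof.
move=> trD; set e : 'M[C]_k := delta_mx b b; set W := 1%:M - 2 *: e.
have ee : e *m e = e by rewrite mul_delta_mx.
have eW : e *m W = - e.
  by rewrite mulmxBr mulmx1 -scalemxAr ee scaler_nat mulr2n opprD addrA subrr add0r.
have Wu : W \is unitarymx.
  have WC : W ^t* = W.
    by apply/matrixP=> i j; rewrite !mxE rmorphB rmorphM /= !rmorph_nat eq_sym andbC.
  apply/unitarymxP; rewrite WC {1}/W mulmxBl mul1mx -scalemxAl eW.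
  by rewrite /W scalerN opprK subrK.
have trW : \tr ((D - e) *m W) = 2 * (1 - D b b).
  rewrite mulmxBl eW opprK mxtraceD /W mulmxBr mulmx1 -scalemxAr raddfB /=.
  rewrite mxtraceZ mxtrace_mul_delta trD -[e]mul1mx mxtrace_mul_delta mxE eqxx /=; ring.
have := norm_tr_mul_unitary_le (D - e) Wu.
rewrite trW normrM (ger0_norm (ler0n _ 2)) => le_trace_norm.
by rewrite /trace_dist mulrC ler_pdivlMr ?ltr0n // mulrC.
Qed.

Lemma incoherent_unitary_conj_diag N (U : 'M[C]_N) : incoherent_unitary U ->
  exists f : 'I_N -> 'I_N,
    forall (M : 'M[C]_N) i, (U *m M *m adjmx U) i i = M (f i) (f i).
Proof.
move=> [pi [ph [ph_unit ->]]]; exists (pi^-1)%g => M i.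
set j0 := (pi^-1)%g i.
have pi_eq l : (i == pi l) = (l == j0).
  by apply/eqP/eqP => [i_pil|->]; rewrite /j0 ?i_pil ?permK ?permKV.
rewrite mxE (bigD1 j0) //= big1 ?addr0; last first.
  by move=> l /negbTE l_j0; rewrite !mxE pi_eq l_j0 conjC0 mulr0.
rewrite mxE (bigD1 j0) //= big1 ?addr0; last first.
  by move=> l /negbTE l_j0; rewrite !mxE pi_eq l_j0 mul0r.
by rewrite !mxE pi_eq eqxx mulrAC -normCK ph_unit expr1n mul1r.
Qed.

Lemma subchannel_diag s b d (U : 'M[C]_(s * (b * d))) tau x (rho rho' : 'M[C]_s) :
  incoherent_unitary U -> (forall a, rho a a = rho' a a) ->
  forall a, subchannel U tau x rho a a = subchannel U tau x rho' a a.
Proof.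
move=> /incoherent_unitary_conj_diag [f Uf] rho_rho' a; rewrite !mxE.
apply: eq_bigr => c _; rewrite !Uf.
by case: (mxtens.mxtens_indexP (f _)) => a' y; rewrite !mxtens.tensmxE rho_rho'.
Qed.

Lemma incoherent_implementable_diag s (E : 'M[C]_s -> 'M[C]_s) (rho rho' : 'M[C]_s) :
  incoherent_implementable E -> (forall a, rho a a = rho' a a) ->
  forall a, E rho a a = E rho' a a.
Proof.
move=> [m [p [S [_ _ S_normalised E_def]]]] rho_rho' a; rewrite !E_def !summxE.
apply: eq_bigr => k _.
have [b [d [tau [U [x [alpha [_ U_incoherent _ _ S_def]]]]]]] := S_normalised k.
have := subchannel_diag tau x U_incoherent rho_rho' a.
by rewrite !S_def !mxE => ->.
Qed.

Lemma incoherent_implementable_trace s (E : 'M[C]_s -> 'M[C]_s) (rho : 'M[C]_s) :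
  incoherent_implementable E -> density rho -> \tr (E rho) = 1.
Proof.
move=> [m [p [S [_ p_sum1 S_normalised ->]]]] rho_density.
rewrite raddf_sum /= -p_sum1; apply: eq_bigr => k _.
have [b [d [tau [U [x [alpha [_ _ _ tr1 ->]]]]]]] := S_normalised k.
by rewrite !mxtraceZ tr1 // mulr1.
Qed.

Definition pure_state k (u : 'rV[C]_k) : 'M[C]_k := u ^t* *m u.

Lemma pure_state_diag k (u : 'rV[C]_k) a : pure_state u a a = `|u 0 a| ^+ 2.
Proof. by rewrite mxE big_ord1 !mxE mulrC normCK. Qed.

Lemma density_pure_state k (u : 'rV[C]_k) : dotmx u u = 1 -> density (pure_state u).
Proof.
move=> u_unit; split; last by rewrite mxtrace_mulC trace_mx11 -dotmxE.
move=> v; rewrite adjmxE.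
have -> : v *m pure_state u *m v ^t* = (v *m u ^t*) *m (v *m u ^t*) ^t*.
  by rewrite trmxC_mul trmxCK !mulmxA.
by rewrite mxE big_ord1 !mxE mul_conjC_ge0.
Qed.

Lemma unitary_pure_state_row k (V : 'M[C]_k) b : V \is unitarymx ->
  V *m pure_state (row b V) *m adjmx V = delta_mx b b.
Proof.
move=> Vu; rewrite adjmxE /pure_state mulmxA -mulmxA -row_mul (unitarymxP Vu) row1.
rewrite -[V *m _]trmxCK trmxC_mul trmxCK -row_mul (unitarymxP Vu) row1.
by rewrite trmx_delta map_delta_mx mul_delta_mx.
Qed.

Lemma incoherent_approx_error_ge s (E : 'M[C]_s -> 'M[C]_s) (V : 'M[C]_s) eps :
  (0 < s)%N -> incoherent_implementable E -> V \is unitarymx ->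
  (forall a b b', `|V b a| = `|V b' a|) ->
  eps_approximates E V eps -> 1 - s%:R^-1 <= eps.
Proof.
move=> s_gt0 E_incoherent Vu V_flat E_approx.
set rho := fun b => pure_state (row b V).
have rho_density b : density (rho b).
  by apply: density_pure_state; have /row_unitarymxP-> := Vu; rewrite eqxx.
have E_rho_trace b := incoherent_implementable_trace E_incoherent (rho_density b).
set D := E (rho (Ordinal s_gt0)).
have trD : \tr D = 1 := E_rho_trace _.
have D_close b : `|1 - D b b| <= eps.
  have -> : D b b = E (rho b) b b.
    apply: incoherent_implementable_diag => // a.
    by rewrite !pure_state_diag !mxE (V_flat a _ b).
  apply: le_trans (trace_dist_delta_ge _ (E_rho_trace b)) _.
  by rewrite -(unitary_pure_state_row b Vu); apply: E_approx.
have sum_close : s%:R - 1 <= s%:R * eps.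
  rewrite -[s%:R - 1]ger0_norm ?subr_ge0 ?ler1n //.
  have -> : s%:R - 1 = \sum_b (1 - D b b) :> C.
    by rewrite sumrB sumr_const card_ord -/(\tr D) trD.
  apply: le_trans (ler_norm_sum _ _ _) _.
  by rewrite mulr_natl -[in X in eps *+ X](card_ord s) -sumr_const ler_sum.
have s_pos : (0 : C) < s%:R by rewrite ltr0n.
by rewrite -(ler_pM2l s_pos) mulrBr mulr1 mulfV ?gt_eqF.
Qed.

Lemma trmxC_tens m n p q (A : 'M[C]_(m, n)) (B : 'M[C]_(p, q)) :
  (mxtens.tensmx A B) ^t* = mxtens.tensmx (A ^t*) (B ^t*).
Proof. by rewrite mxtens.trmx_tens mxtens.map_mxT. Qed.

Lemma tensmx11 m n : mxtens.tensmx (1%:M : 'M[C]_m) (1%:M : 'M[C]_n) = 1%:M.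
Proof.
apply/matrixP=> i j.
case: (mxtens.mxtens_indexP i) => i1 i2; case: (mxtens.mxtens_indexP j) => j1 j2.
rewrite mxtens.tensmxE !mxE (inj_eq (can_inj (@mxtens.mxtens_indexK _ _))).
by rewrite xpair_eqE -natrM mulnb.
Qed.

Lemma tensmx_unitary m n p q (A : 'M[C]_(m, n)) (B : 'M[C]_(p, q)) :
  A \is unitarymx -> B \is unitarymx -> mxtens.tensmx A B \is unitarymx.
Proof.
move=> /unitarymxP Au /unitarymxP Bu; apply/unitarymxP.
by rewrite trmxC_tens mxtens.tensmx_mul Au Bu tensmx11.
Qed.

Lemma norm_tensmx m n p q (A : 'M[C]_(m, n)) (B : 'M[C]_(p, q)) x y :
  (forall i j, `|A i j| = x) -> (forall i j, `|B i j| = y) ->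
  forall i j, `|mxtens.tensmx A B i j| = x * y.
Proof.
move=> A_flat B_flat i j.
case: (mxtens.mxtens_indexP i) => i1 i2; case: (mxtens.mxtens_indexP j) => j1 j2.
by rewrite mxtens.tensmxE normrM A_flat B_flat.
Qed.

Lemma hadamardE i j : hadamard C i j = (sqrtC 2)^-1 * (-1) ^+ (i * j).
Proof. by rewrite !mxE. Qed.

Lemma norm_hadamard i j : `|hadamard C i j| = (sqrtC 2)^-1.
Proof.
by rewrite hadamardE normrM normrX normrN1 expr1n mulr1 normfV ger0_norm ?sqrtC_ge0.
Qed.

Lemma hadamard_unitary : hadamard C \is unitarymx.
Proof.
have sqrt2_real : sqrtC 2 \is @Num.real C by rewrite realE sqrtC_ge0 ler0n.
have sqrt2_invK : (sqrtC 2)^-1 * (sqrtC 2)^-1 = 2^-1 :> C.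
  by rewrite -invfM -expr2 sqrtCK.
have hadamard_sym : hadamard C ^t* = hadamard C.
  apply/matrixP => i j; rewrite !mxE mulnC conj_Creal //.
  by rewrite rpredM ?rpredV ?rpredX ?rpredN ?rpred1.
have hadamard_mul i k j : hadamard C i k * hadamard C k j =
    2^-1 * ((-1) ^+ (i * k) * (-1) ^+ (k * j)).
  by rewrite !hadamardE mulrACA sqrt2_invK.
apply/unitarymxP/matrixP => i j; rewrite hadamard_sym mxE !big_ord_recl big_ord0.
rewrite !hadamard_mul addr0 -mulrDr mxE.
case: i => [[|[|//]] ?]; case: j => [[|[|//]] ?] /=;
  by rewrite ?muln0 ?muln1 ?expr0 ?expr1; field.
Qed.

Lemma hadamard_n_unitary n : hadamard_n C n \is unitarymx.
Proof.
case: n => [|n]; first by apply/unitarymxP; rewrite trmx1 map_mx1 mulmx1.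
elim: n => [|n IHn]; first exact: hadamard_unitary.
exact: tensmx_unitary hadamard_unitary IHn.
Qed.

Lemma norm_hadamard_n n i j : `|hadamard_n C n i j| = (sqrtC 2)^-1 ^+ n.
Proof.
case: n i j => [|n]; first by do 2![case=> [[|//] ?]]; rewrite mxE normr1.
elim: n => [|n IHn] i j; first exact: norm_hadamard.
by rewrite exprS (norm_tensmx norm_hadamard IHn).
Qed.

End IncoherentHadamard.

Theorem theorem2 (C : numClosedFieldType) (n : nat)
    (E : 'M[C]_(2 ^ n) -> 'M[C]_(2 ^ n)) (eps : C) :
  incoherent_implementable E -> 0 <= eps -> eps < 1 - 2 ^- n ->
  ~ eps_approximates E (hadamard_n C n) eps.
Proof.
move=> E_incoherent _ eps_small E_approx.
have flat a b b' : `|hadamard_n C n b a| = `|hadamard_n C n b' a|.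
  by rewrite !norm_hadamard_n.
have := incoherent_approx_error_ge (expn_gt0 2 n) E_incoherent
  (hadamard_n_unitary C n) flat E_approx.
by rewrite natrX => /(lt_le_trans eps_small); rewrite ltxx.
Qed.
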